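(* Let $\alpha>-1$, $\alpha\ne0$, let $\eta_1=\eta_1(\alpha)\in(0,1)$ be the root of $\eta^\alpha=\dfrac{1}{1+\alpha(\eta+1)}$, and let $$\psi_0(\alpha,\eta)=\dfrac{(1+\eta^{\alpha+1})^{1/\alpha}}{(1+\eta)^{(\alpha+1)/\alpha}}+\dfrac{(\alpha+1)^{(\alpha+1)/\alpha}}{\alpha}\left[\dfrac1{1+\eta^{\alpha+1}}-\dfrac1{1+\eta}\right].$$ Then the function $\eta\mapsto\psi_0(\alpha,\eta)$ attains its maximal value on $[0,\eta_1]$ at an interior point $\eta_{\max}=\eta_{\max}(\alpha)\in(0,\eta_1)$, at which $\dfrac{\partial}{\partial\eta}\psi_0(\alpha,\eta_{\max})=0$. *)

From Stdlib Require Import Reals.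
Open Scope R_scope.

(* Real power x^y for x >= 0: Rpower for x > 0, and 0 for x <= 0
   (so that 0^y = 0 for y > 0, as used at eta = 0). *)
Definition rpow (x y : R) : R := if Rlt_dec 0 x then Rpower x y else 0.

Definition psi0 (a eta : R) : R :=
  rpow (1 + rpow eta (a + 1)) (1 / a) / rpow (1 + eta) ((a + 1) / a)
  + rpow (a + 1) ((a + 1) / a) / a
    * (1 / (1 + rpow eta (a + 1)) - 1 / (1 + eta)).

Definition eta1_root (a eta : R) : Prop :=
  0 < eta < 1 /\ rpow eta a = 1 / (1 + a * (eta + 1)).

(* psi0(a, .) is continuous on [0, oo) and differentiable on (0, oo).  Its
   derivative is positive near 0: for a > 0 it tends to
   ((a + 1)^((a + 1)/a) - (a + 1)) / a > 0, for -1 < a < 0 it tends to +oo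
   because x^a does.  At a root eta of eta^a = 1/(1 + a(eta + 1)) the
   derivative is negative.  Hence the maximum of psi0 on [0, eta1], which
   exists by continuity, is attained neither at 0 nor at eta1, and at the
   interior maximiser the derivative vanishes. *)

From Stdlib Require Import Reals Lra.
From Coquelicot Require Import Coquelicot.
Open Scope R_scope.

Lemma exists_lt_left_of_derive_pos (f : R -> R) (x l d : R) :
  derivable_pt_lim f x l -> 0 < l -> 0 < d ->
  exists y, x - d < y < x /\ f y < f x.
Proof.
intros Hf Hl Hd.
destruct (Hf (l / 2)) as [del Hdel]; [lra|].
assert (Hdel0 := cond_pos del).
set (h := - Rmin del d / 2).
assert (Hh : - d < h < 0 /\ Rabs h < del).
{ unfold h; assert (Hm := Rmin_glb_lt del d 0 Hdel0 Hd).
  rewrite Rabs_left; assert (Rmin del d <= del) by apply Rmin_l;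
  assert (Rmin del d <= d) by apply Rmin_r; lra. }
specialize (Hdel h ltac:(lra) ltac:(lra)).
apply Rabs_lt_between' in Hdel.
set (q := (f (x + h) - f x) / h) in Hdel.
assert (Hq : f (x + h) - f x = q * h) by (unfold q; field; lra).
exists (x + h); split; [lra|].
assert (q * h < 0) by (apply Rmult_pos_neg; lra).
lra.
Qed.

Lemma lt_of_derive_pos (f d : R -> R) (p q : R) : p < q ->
  (forall x, p <= x <= q -> continuity_pt f x) ->
  (forall x, p < x <= q -> derivable_pt_lim f x (d x)) ->
  (forall x, p < x <= q -> 0 < d x) -> f p < f q.
Proof.
intros Hpq Hc Hd Hpos.
assert (Hdrop : forall x, p < x <= q -> exists y, p < y < x /\ f y < f x).
{ intros x Hx.
  destruct (exists_lt_left_of_derive_pos f x (d x) (x - p)) as [y [Hy Hfy]];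
    [apply Hd | apply Hpos | |]; try lra.
  exists y; split; [lra | exact Hfy]. }
destruct (continuity_ab_min f p q ltac:(lra) Hc) as [m [Hmin Hm]].
assert (Hmp : m = p).
{ destruct (Req_dec m p) as [|Hne]; [assumption|].
  destruct (Hdrop m ltac:(lra)) as [y [Hy Hfy]].
  specialize (Hmin y ltac:(lra)); lra. }
subst m.
destruct (Hdrop q ltac:(lra)) as [y [Hy Hfy]].
specialize (Hmin y ltac:(lra)); lra.
Qed.

Lemma exists_interior_max_critical (f d : R -> R) (p q e : R) :
  p < e <= q ->
  (forall x, p <= x <= q -> continuity_pt f x) ->
  (forall x, p < x <= q -> derivable_pt_lim f x (d x)) ->
  (forall x, p < x <= e -> 0 < d x) -> d q < 0 ->
  exists m, p < m < q /\ (forall x, p <= x <= q -> f x <= f m) /\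
    derivable_pt_lim f m 0.
Proof.
intros He Hc Hd Hpos Hq.
destruct (continuity_ab_maj f p q ltac:(lra) Hc) as [m [Hmax Hm]].
assert (Hpe : f p < f e).
{ apply (lt_of_derive_pos f d); try lra;
    intros x Hx; [apply Hc | apply Hd | apply Hpos]; lra. }
assert (Hmp : m <> p) by (intros ->; specialize (Hmax e ltac:(lra)); lra).
assert (Hmq : m <> q).
{ intros ->.
  destruct (exists_lt_left_of_derive_pos (- f)%F q (- d q) (q - p))
    as [y [Hy Hfy]]; try lra.
  { apply derivable_pt_lim_opp, Hd; lra. }
  specialize (Hmax y ltac:(lra)); unfold opp_fct in Hfy; lra. }
exists m; split; [lra|]; split; [exact Hmax|].
assert (Hdm := Hd m ltac:(lra)).
replace 0 with (d m); [exact Hdm|].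
rewrite <- (derive_pt_eq_0 f m (d m) (exist _ (d m) Hdm) Hdm).
apply (deriv_maximum f p q); try lra.
intros x Hx1 Hx2; apply Hmax; lra.
Qed.

Lemma rpow_pos (x y : R) : 0 < x -> rpow x y = Rpower x y.
Proof. intros Hx; unfold rpow; destruct (Rlt_dec 0 x); [reflexivity | lra]. Qed.

Lemma rpow_nonpos (x y : R) : x <= 0 -> rpow x y = 0.
Proof. intros Hx; unfold rpow; destruct (Rlt_dec 0 x); [lra | reflexivity]. Qed.

Lemma Rpower_pos (x y : R) : 0 < Rpower x y.
Proof. apply exp_pos. Qed.

Lemma Rpower_le_near_0 (p eps : R) : 0 < p -> 0 < eps ->
  exists del, 0 < del /\ forall x, 0 < x <= del -> Rpower x p <= eps.
Proof.
intros Hp Heps; exists (Rpower eps (/ p)); split; [apply Rpower_pos|].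
intros x Hx.
replace eps with (Rpower (Rpower eps (/ p)) p)
  by (rewrite Rpower_mult, Rinv_l, Rpower_1; lra).
apply Rle_Rpower_l; lra.
Qed.

Lemma Rpower_ge_near_0 (p M : R) : p < 0 -> 0 < M ->
  exists del, 0 < del /\ forall x, 0 < x <= del -> M <= Rpower x p.
Proof.
intros Hp HM.
destruct (Rpower_le_near_0 (- p) (/ M)) as [del [Hdel H]];
  [lra | now apply Rinv_0_lt_compat |].
exists del; split; [exact Hdel|].
intros x Hx; specialize (H x Hx).
rewrite <- (Ropp_involutive p), Rpower_Ropp, <- (Rinv_inv M).
apply Rinv_le_contravar; [apply Rpower_pos | exact H].
Qed.

Lemma rpow_continuous_0 (p : R) : 0 < p -> continuity_pt (fun x => rpow x p) 0.
Proof.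
intros Hp eps Heps.
destruct (Rpower_le_near_0 p (eps / 2)) as [del [Hdel H]]; [lra | lra |].
exists del; split; [exact Hdel|].
intros x [_ Hx]; simpl in *; unfold Rdist in *.
rewrite (rpow_nonpos 0) by lra; rewrite Rminus_0_r in *.
destruct (Rlt_le_dec 0 x) as [Hx0 | Hx0].
- rewrite rpow_pos, Rabs_pos_eq by (try apply Rlt_le, Rpower_pos; lra).
  rewrite Rabs_pos_eq in Hx by lra.
  specialize (H x ltac:(lra)); lra.
- rewrite rpow_nonpos, Rabs_R0 by lra; lra.
Qed.

Lemma Rpower_plus_1 (x p : R) : 0 < x -> Rpower x (p + 1) = Rpower x p * x.
Proof. intros Hx; rewrite Rpower_plus, Rpower_1 by exact Hx; reflexivity. Qed.

Lemma Rpower_1_l (p : R) : Rpower 1 p = 1.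
Proof. unfold Rpower; rewrite ln_1, Rmult_0_r; apply exp_0. Qed.

Lemma Rpower_le_l_nonpos (y z q : R) : q <= 0 -> 0 < y <= z ->
  Rpower z q <= Rpower y q.
Proof.
intros Hq Hyz.
rewrite <- (Ropp_involutive q), (Rpower_Ropp z (- q)), (Rpower_Ropp y (- q)).
apply Rinv_le_contravar; [apply Rpower_pos | apply Rle_Rpower_l; lra].
Qed.

Lemma Rpower_le_1 (x p : R) : 0 <= p -> 0 < x <= 1 -> Rpower x p <= 1.
Proof. intros Hp Hx; rewrite <- (Rpower_1_l p); apply Rle_Rpower_l; lra. Qed.

Lemma Rpower_ge_1 (x p : R) : p <= 0 -> 0 < x <= 1 -> 1 <= Rpower x p.
Proof.
intros Hp Hx; rewrite <- (Rpower_1_l p); apply Rpower_le_l_nonpos; lra.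
Qed.

Section Psi0.

Variable a : R.
Hypothesis ha : -1 < a.
Hypothesis ha0 : a <> 0.

Definition psi0_coef : R := Rpower (a + 1) ((a + 1) / a).

Definition psi0_head (x : R) : R :=
  Rpower (1 + Rpower x (a + 1)) (1 / a) / Rpower (1 + x) ((a + 1) / a).

Definition dpsi0 (x : R) : R :=
  ((a + 1) * psi0_head x * (Rpower x a / (1 + Rpower x (a + 1)) - 1 / (1 + x))
   + psi0_coef * (1 / (1 + x) ^ 2
                  - (a + 1) * Rpower x a / (1 + Rpower x (a + 1)) ^ 2)) / a.

Lemma psi0_Rpower (x : R) : 0 < x ->
  psi0 a x = psi0_head x
             + psi0_coef / a * (1 / (1 + Rpower x (a + 1)) - 1 / (1 + x)).
Proof.
intros Hx; unfold psi0, psi0_head, psi0_coef.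
assert (0 < Rpower x (a + 1)) by apply Rpower_pos.
rewrite (rpow_pos x), !rpow_pos by lra; reflexivity.
Qed.

Lemma psi0_derivative (x : R) : 0 < x -> derivable_pt_lim (psi0 a) x (dpsi0 x).
Proof.
intros Hx; apply is_derive_Reals.
apply (is_derive_ext_loc (fun y => psi0_head y
  + psi0_coef / a * (1 / (1 + Rpower y (a + 1)) - 1 / (1 + y)))).
{ exists (mkposreal x Hx); intros y Hy.
  apply Rabs_lt_between' in Hy; simpl in Hy.
  symmetry; apply psi0_Rpower; lra. }
assert (Hxa := Rpower_plus_1 x a Hx).
assert (0 < Rpower x a) by apply Rpower_pos.
unfold dpsi0, psi0_head, Rpower in *.
assert (0 < exp ((a + 1) * ln x)) by apply exp_pos.
auto_derive.
- repeat split; try apply Rgt_not_eq, exp_pos; lra.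
- rewrite Hxa; field.
  repeat split; try apply Rgt_not_eq, exp_pos; nra.
Qed.

Lemma psi0_continuous_0 : continuity_pt (psi0 a) 0.
Proof.
set (P y := rpow y (a + 1)).
assert (HP : forall y, 0 <= P y).
{ intros y; unfold P; destruct (Rlt_le_dec 0 y).
  - rewrite rpow_pos by lra; apply Rlt_le, Rpower_pos.
  - rewrite rpow_nonpos by lra; apply Rle_refl. }
apply continuity_pt_locally_ext with
  (fun y => Rpower (1 + P y) (1 / a) * / Rpower (1 + y) ((a + 1) / a)
            + psi0_coef / a * (1 / (1 + P y) - 1 / (1 + y))) 1; [lra | |].
{ intros y Hy; unfold Rdist in Hy; rewrite Rminus_0_r in Hy.
  apply Rabs_lt_between in Hy; specialize (HP y).
  unfold psi0, psi0_coef; fold (P y).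
  rewrite !rpow_pos by lra; reflexivity. }
assert (HP0 : continuous P 0)
  by (apply continuity_pt_filterlim, rpow_continuous_0; lra).
assert (HP00 : P 0 = 0) by (apply rpow_nonpos; lra).
assert (Hsmooth : forall g : R -> R, ex_derive g 0 -> continuous g 0)
  by (intros g; apply (@ex_derive_continuous R_AbsRing R_NormedModule)).
apply continuity_pt_filterlim.
apply (continuous_plus
  (fun y => Rpower (1 + P y) (1 / a) * / Rpower (1 + y) ((a + 1) / a))
  (fun y => psi0_coef / a * (1 / (1 + P y) - 1 / (1 + y)))).
- apply (continuous_mult (fun y => Rpower (1 + P y) (1 / a))
                         (fun y => / Rpower (1 + y) ((a + 1) / a))).
  + apply (continuous_comp P (fun t => Rpower (1 + t) (1 / a))); [exact HP0|].
    rewrite HP00; apply Hsmooth; unfold Rpower; auto_derive; lra.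
  + apply Hsmooth; unfold Rpower; auto_derive.
    split; [lra | split; [apply Rgt_not_eq, exp_pos | exact I]].
- apply (continuous_scal_r (psi0_coef / a)
                           (fun y => 1 / (1 + P y) - 1 / (1 + y))).
  apply (continuous_minus (fun y => 1 / (1 + P y)) (fun y => 1 / (1 + y))).
  + apply (continuous_comp P (fun t => 1 / (1 + t))); [exact HP0|].
    rewrite HP00; apply Hsmooth; auto_derive; lra.
  + apply Hsmooth; auto_derive; lra.
Qed.

Lemma psi0_continuous (x : R) : 0 <= x -> continuity_pt (psi0 a) x.
Proof.
intros [Hx | <-]; [|exact psi0_continuous_0].
apply derivable_continuous_pt.
exact (exist _ (dpsi0 x) (psi0_derivative x Hx)).
Qed.

Lemma psi0_head_pos (x : R) : 0 < psi0_head x.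
Proof. apply Rdiv_lt_0_compat; apply Rpower_pos. Qed.

(* With s = 1 + x^(a+1), w = 1/(1+x), A = psi0_head x and c = psi0_coef.  As
   x -> 0+, s and w tend to 1: for a > 0 the first summand vanishes and the
   second tends to c - (a + 1); for a < 0 the first tends to -oo since
   x^a -> +oo while A s <= 1 < c. *)
Lemma dpsi0_split (x : R) : 0 < x ->
  a * dpsi0 x =
    (a + 1) * Rpower x a
      * (psi0_head x * (1 + Rpower x (a + 1)) - psi0_coef)
      / (1 + Rpower x (a + 1)) ^ 2
    + 1 / (1 + x) * (psi0_coef * (1 / (1 + x)) - (a + 1) * psi0_head x).
Proof.
intros Hx; assert (0 < Rpower x (a + 1)) by apply Rpower_pos.
unfold dpsi0; field; lra.
Qed.

Lemma psi0_head_mul_le_1_pos (x : R) : 0 < a -> 0 < x <= 1 ->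
  psi0_head x * (1 + x) <= 1.
Proof.
intros Ha Hx.
assert (Hu : Rpower x a <= 1) by (apply Rpower_le_1; lra).
assert (Hs : 0 < 1 + Rpower x (a + 1) <= 1 + x).
{ assert (0 < Rpower x a) by apply Rpower_pos.
  rewrite Rpower_plus_1 by lra; nra. }
assert (0 < Rpower (1 + x) (1 / a)) by apply Rpower_pos.
replace (psi0_head x * (1 + x))
  with (Rpower (1 + Rpower x (a + 1)) (1 / a) / Rpower (1 + x) (1 / a)).
- apply (Rdiv_le_1 _ _ H).
  apply Rle_Rpower_l; [apply Rlt_le, Rdiv_lt_0_compat |]; lra.
- unfold psi0_head; replace ((a + 1) / a) with (1 / a + 1) by (field; lra).
  rewrite (Rpower_plus_1 (1 + x)) by lra; field; lra.
Qed.

Lemma psi0_head_mul_le_1_neg (x : R) : a < 0 -> 0 < x <= 1 ->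
  psi0_head x * (1 + Rpower x (a + 1)) <= 1.
Proof.
intros Ha Hx.
assert (Hu : 1 <= Rpower x a) by (apply Rpower_ge_1; lra).
assert (Hs : 0 < 1 + x <= 1 + Rpower x (a + 1))
  by (rewrite Rpower_plus_1 by lra; nra).
assert (0 < Rpower (1 + x) ((a + 1) / a)) by apply Rpower_pos.
replace (psi0_head x * (1 + Rpower x (a + 1)))
  with (Rpower (1 + Rpower x (a + 1)) ((a + 1) / a)
        / Rpower (1 + x) ((a + 1) / a)).
- apply (Rdiv_le_1 _ _ H).
  apply Rpower_le_l_nonpos; [|lra].
  assert (/ a < 0) by (apply Rinv_lt_0_compat; lra).
  unfold Rdiv; nra.
- unfold psi0_head.
  replace ((a + 1) / a) with (1 / a + 1) at 1 by (field; lra).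
  rewrite (Rpower_plus_1 (1 + Rpower x (a + 1))) by lra; field; lra.
Qed.

Lemma psi0_coef_gt_pos : 0 < a -> a + 1 < psi0_coef.
Proof.
intros Ha; unfold psi0_coef.
rewrite <- (Rpower_1 (a + 1)) at 1 by lra.
apply Rpower_lt; [lra|].
apply Rmult_lt_reg_r with a; [exact Ha|]; unfold Rdiv.
rewrite Rmult_assoc, Rinv_l; lra.
Qed.

Lemma psi0_coef_gt_neg : a < 0 -> 1 < psi0_coef.
Proof.
intros Ha.
assert (ln (a + 1) < 0) by (rewrite <- ln_1; apply ln_increasing; lra).
assert (/ a < 0) by (apply Rinv_lt_0_compat; lra).
assert (0 < / a * ln (a + 1)) by nra.
unfold psi0_coef, Rpower; rewrite <- exp_0 at 1; apply exp_increasing.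
unfold Rdiv; rewrite Rmult_assoc; apply Rmult_lt_0_compat; lra.
Qed.

Lemma dpsi0_pos_near_0_pos : 0 < a ->
  exists e, 0 < e /\ forall x, 0 < x <= e -> 0 < dpsi0 x.
Proof.
intros Ha; set (c := psi0_coef).
assert (Hc : a + 1 < c) by exact (psi0_coef_gt_pos Ha).
destruct (Rpower_le_near_0 a ((c - (a + 1)) / (8 * c * (a + 1))))
  as [del [Hdel Hu]];
  [lra | apply Rdiv_lt_0_compat; [lra | apply Rmult_lt_0_compat; lra] |].
exists (Rmin del 1); split; [apply Rmin_glb_lt; lra|].
intros x [Hx0 Hx]; assert (Hx1 := Rle_trans _ _ _ Hx (Rmin_r del 1)).
specialize (Hu x (conj Hx0 (Rle_trans _ _ _ Hx (Rmin_l del 1)))).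
assert (HA := psi0_head_mul_le_1_pos x Ha (conj Hx0 Hx1)).
assert (HA0 := psi0_head_pos x).
assert (0 < Rpower x a) by apply Rpower_pos.
assert (0 < Rpower x (a + 1)) by apply Rpower_pos.
set (u := Rpower x a) in *; set (A := psi0_head x) in *.
set (s := 1 + Rpower x (a + 1)) in *; set (w := 1 / (1 + x)).
assert (Hw : 1 / 2 <= w <= 1).
{ unfold w, Rdiv; rewrite !Rmult_1_l, <- Rinv_1; split;
    apply Rinv_le_contravar; lra. }
assert (HAw : A <= w) by (apply (Rle_div_r A 1 (1 + x)); lra).
assert (Hs : 1 <= s) by (unfold s; lra).
assert (T1 : - ((a + 1) * u * c) <= (a + 1) * u * (A * s - c) / s ^ 2).
{ apply (Rle_div_r _ _ (s ^ 2)); [nra|].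
  assert (0 <= A * s + c * (s ^ 2 - 1))
    by (apply Rplus_le_le_0_compat; apply Rmult_le_pos; nra).
  assert (0 <= (a + 1) * u * (A * s + c * (s ^ 2 - 1)))
    by (apply Rmult_le_pos; nra).
  nra. }
assert (T2 : (c - (a + 1)) * w ^ 2 <= w * (c * w - (a + 1) * A)).
{ assert (0 <= (a + 1) * (w * (w - A)))
    by (apply Rmult_le_pos; [|apply Rmult_le_pos]; lra).
  nra. }
assert (Hu' : (a + 1) * u * c <= (c - (a + 1)) / 8).
{ replace ((c - (a + 1)) / 8)
    with ((a + 1) * c * ((c - (a + 1)) / (8 * c * (a + 1))))
    by (field; lra).
  rewrite (Rmult_comm ((a + 1) * u)), <- Rmult_assoc, (Rmult_comm c).
  apply Rmult_le_compat_l; nra. }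
apply Rmult_lt_reg_l with a; [exact Ha|]; rewrite Rmult_0_r, dpsi0_split by lra.
fold u A s c w.
assert ((c - (a + 1)) / 4 <= (c - (a + 1)) * w ^ 2).
{ assert (1 / 4 <= w ^ 2) by nra.
  replace ((c - (a + 1)) / 4) with ((c - (a + 1)) * (1 / 4)) by field.
  apply Rmult_le_compat_l; lra. }
lra.
Qed.

Lemma dpsi0_pos_near_0_neg : a < 0 ->
  exists e, 0 < e /\ forall x, 0 < x <= e -> 0 < dpsi0 x.
Proof.
intros Ha; set (c := psi0_coef).
assert (Hc : 1 < c) by exact (psi0_coef_gt_neg Ha).
destruct (Rpower_ge_near_0 a (8 * c / ((a + 1) * (c - 1)))) as [del [Hdel Hu]];
  [lra | apply Rdiv_lt_0_compat; [lra | apply Rmult_lt_0_compat; lra] |].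
exists (Rmin del 1); split; [apply Rmin_glb_lt; lra|].
intros x [Hx0 Hx]; assert (Hx1 := Rle_trans _ _ _ Hx (Rmin_r del 1)).
specialize (Hu x (conj Hx0 (Rle_trans _ _ _ Hx (Rmin_l del 1)))).
assert (HA := psi0_head_mul_le_1_neg x Ha (conj Hx0 Hx1)).
assert (HA0 := psi0_head_pos x).
assert (0 < Rpower x a) by apply Rpower_pos.
assert (0 < Rpower x (a + 1) <= 1)
  by (split; [apply Rpower_pos | apply Rpower_le_1; lra]).
set (u := Rpower x a) in *; set (A := psi0_head x) in *.
set (s := 1 + Rpower x (a + 1)) in *; set (w := 1 / (1 + x)).
assert (Hw : 0 < w <= 1).
{ unfold w, Rdiv; rewrite Rmult_1_l, <- Rinv_1; split;
    [apply Rinv_0_lt_compat | apply Rinv_le_contravar]; lra. }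
assert (Hs : 1 <= s <= 2) by (unfold s; lra).
assert (T1 : (a + 1) * u * (A * s - c) / s ^ 2 <= - (a + 1) * (c - 1) * u / 4).
{ apply (Rle_div_l _ _ (s ^ 2)); [nra|].
  assert ((a + 1) * u * (A * s - c) <= - (a + 1) * (c - 1) * u)
    by (assert (0 <= (a + 1) * u * (1 - A * s))
          by (apply Rmult_le_pos; [apply Rmult_le_pos|]; lra); nra).
  assert ((a + 1) * (c - 1) * u * s ^ 2 <= (a + 1) * (c - 1) * u * 4)
    by (apply Rmult_le_compat_l;
        [apply Rmult_le_pos; [apply Rmult_le_pos|] | nra]; lra).
  lra. }
assert (T2 : w * (c * w - (a + 1) * A) <= c).
{ assert (0 <= w * ((a + 1) * A))
    by (apply Rmult_le_pos; [|apply Rmult_le_pos]; lra).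
  assert (c * w ^ 2 <= c * 1) by (apply Rmult_le_compat_l; nra).
  lra. }
assert (Hu' : 2 * c <= (a + 1) * (c - 1) * u / 4).
{ replace (2 * c) with ((a + 1) * (c - 1) * (8 * c / ((a + 1) * (c - 1))) / 4)
    by (field; lra).
  apply Rmult_le_compat_r; [lra|].
  apply Rmult_le_compat_l; [apply Rmult_le_pos|]; lra. }
assert (Hneg : a * dpsi0 x < 0).
{ rewrite dpsi0_split by lra; fold u A s c w; lra. }
nra.
Qed.

Lemma dpsi0_pos_near_0 : exists e, 0 < e /\ forall x, 0 < x <= e -> 0 < dpsi0 x.
Proof.
destruct (Rlt_or_le 0 a) as [Ha | Ha].
- exact (dpsi0_pos_near_0_pos Ha).
- apply dpsi0_pos_near_0_neg; lra.
Qed.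

(* At a root, 1 + e^(a+1) = (1 + a)(1 + e) e^a, and dpsi0 collapses to a sum
   of two negative terms. *)
Lemma dpsi0_neg_at_root (e : R) : eta1_root a e -> dpsi0 e < 0.
Proof.
intros [He Hroot]; rewrite rpow_pos in Hroot by lra.
assert (Hu := Rpower_pos e a).
assert (HD : 0 < 1 + a * (e + 1)).
{ destruct (Rlt_or_le 0 (1 + a * (e + 1))) as [|HD]; [assumption|].
  rewrite Hroot in Hu; destruct HD as [HD | HD].
  - assert (/ (1 + a * (e + 1)) < 0) by (apply Rinv_lt_0_compat; lra).
    unfold Rdiv in Hu; lra.
  - rewrite HD in Hu; unfold Rdiv in Hu; rewrite Rinv_0 in Hu; lra. }
assert (HA := psi0_head_pos e).
assert (Hc : 0 < psi0_coef) by apply Rpower_pos.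
replace (dpsi0 e)
  with (- psi0_head e / (1 + e) - psi0_coef * e / ((1 + a) * (1 + e) ^ 2)).
- assert (0 < psi0_head e / (1 + e)) by (apply Rdiv_lt_0_compat; lra).
  assert (0 < psi0_coef * e / ((1 + a) * (1 + e) ^ 2)).
  { apply Rdiv_lt_0_compat; [nra|].
    apply Rmult_lt_0_compat; [|apply pow_lt]; lra. }
  lra.
- unfold dpsi0; rewrite Rpower_plus_1, Hroot by lra.
  field; lra.
Qed.

End Psi0.

Theorem corollary2p6 (a eta1 : R) (ha : -1 < a) (ha0 : a <> 0)
  (h1 : eta1_root a eta1)
  (huniq : forall e, eta1_root a e -> e = eta1) :
  exists etamax : R,
    0 < etamax < eta1 /\
    (forall e, 0 <= e <= eta1 -> psi0 a e <= psi0 a etamax) /\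
    derivable_pt_lim (fun e => psi0 a e) etamax 0.
Proof.
destruct (dpsi0_pos_near_0 a ha ha0) as [e [He Hpos]].
assert (Heta1 : 0 < eta1) by apply h1.
apply (exists_interior_max_critical (psi0 a) (dpsi0 a) 0 eta1 (Rmin e eta1)).
- split; [apply Rmin_glb_lt; lra | apply Rmin_r].
- intros x Hx; apply psi0_continuous; lra.
- intros x Hx; apply psi0_derivative; lra.
- intros x [Hx0 Hx]; apply Hpos; split; [lra|].
  exact (Rle_trans _ _ _ Hx (Rmin_l e eta1)).
- exact (dpsi0_neg_at_root a ha ha0 eta1 h1).
Qed.
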